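(* Let $\{\mathcal G,(\Gamma_0,\Gamma_1),(\widetilde\Gamma_0,\widetilde\Gamma_1)\}$ be a triple for the adjoint pair $\{S,\widetilde S\}$ satisfying (G), (D), (M), with $\rho(A_0)\neq\emptyset$, $\gamma$-fields $\gamma,\widetilde\gamma$ and Weyl functions $M,\widetilde M$. Let $B,\widetilde B$ be linear operators in $\mathcal G$, $\lambda\in\rho(A_0)$, $\mu\in\rho(\widetilde A_0)$. (i) If $\lambda\notin\sigma_p(A_B)$ and $f\in\mathfrak H$ satisfies $\widetilde\gamma(\overline\lambda)^*f\in\operatorname{dom}B$ and $B\widetilde\gamma(\overline\lambda)^*f\in\operatorname{ran}(I-BM(\lambda))$, then $f\in\operatorname{ran}(A_B-\lambda)$ and $(A_B-\lambda)^{-1}f=(A_0-\lambda)^{-1}f+\gamma(\lambda)(I-BM(\lambda))^{-1}B\widetilde\gamma(\overline\lambda)^*f$. (ii) If $\mu\notin\sigma_p(\widetilde A_{\widetilde B})$ and $g\in\mathfrak H$ satisfies $\gamma(\overline\mu)^*g\in\operatorname{dom}\widetilde B$ and $\widetilde B\gamma(\overline\mu)^*g\in\operatorname{ran}(I-\widetilde B\widetilde M(\mu))$, then $g\in\operatorname{ran}(\widetilde A_{\widetilde B}-\mu)$ and $(\widetilde A_{\widetilde B}-\mu)^{-1}g=(\widetilde A_0-\mu)^{-1}g+\widetilde\gamma(\mu)(I-\widetilde B\widetilde M(\mu))^{-1}\widetilde B\gamma(\overline\mu)^*g$.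
   Context: Let $\mathfrak H$ be a separable Hilbert space. An adjoint pair $\{S,\widetilde S\}$ consists of densely defined closed operators $S,\widetilde S$ in $\mathfrak H$ with $(Sf,g)=(f,\widetilde Sg)$ for all $f\in\operatorname{dom}S$, $g\in\operatorname{dom}\widetilde S$. Fix operators $T\subset S^*$ and $\widetilde T\subset\widetilde S^*$ which are cores, i.e. $\overline T=S^*$ and $\overline{\widetilde T}=\widetilde S^*$. A triple $\{\mathcal G,(\Gamma_0,\Gamma_1),(\widetilde\Gamma_0,\widetilde\Gamma_1)\}$ for $\{S,\widetilde S\}$ consists of a Hilbert space $\mathcal G$ and linear maps $\Gamma_0,\Gamma_1:\operatorname{dom}T\to\mathcal G$, $\widetilde\Gamma_0,\widetilde\Gamma_1:\operatorname{dom}\widetilde T\to\mathcal G$. Put $A_0:=T\upharpoonright\ker\Gamma_0$ and $\widetilde A_0:=\widetilde T\upharpoonright\ker\widetilde\Gamma_0$. Conditions: (G) $(Tf,g)_{\mathfrak H}-(f,\widetilde Tg)_{\mathfrak H}=(\Gamma_1f,\widetilde\Gamma_0g)_{\mathcal G}-(\Gamma_0f,\widetilde\Gamma_1g)_{\mathcal G}$ for all $f\in\operatorname{dom}T$, $g\in\operatorname{dom}\widetilde T$; (D) $\operatorname{ran}\Gamma_0$ and $\operatorname{ran}\widetilde\Gamma_0$ are dense in $\mathcal G$; (M) $A_0^*=\widetilde A_0$ and $\widetilde A_0^*=A_0$. For $\lambda\in\rho(A_0)$ one has $\operatorname{dom}T=\ker\Gamma_0\dotplus\ker(T-\lambda)$,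 so $\Gamma_0\upharpoonright\ker(T-\lambda)$ is injective; similarly for $\widetilde T$. The $\gamma$-fields are $\gamma(\lambda):=(\Gamma_0\upharpoonright\ker(T-\lambda))^{-1}$, $\widetilde\gamma(\mu):=(\widetilde\Gamma_0\upharpoonright\ker(\widetilde T-\mu))^{-1}$; the Weyl functions are $M(\lambda):=\Gamma_1\gamma(\lambda)$, $\lambda\in\rho(A_0)$, and $\widetilde M(\mu):=\widetilde\Gamma_1\widetilde\gamma(\mu)$, $\mu\in\rho(\widetilde A_0)$. Products of operators have their natural domains, and $(I-BM(\lambda))^{-1}$ denotes the inverse of the injective operator $I-BM(\lambda)$ on its range. Define $A_Bf:=Tf$ on $\operatorname{dom}A_B:=\{f\in\operatorname{dom}T:\Gamma_1f\in\operatorname{dom}B,\ B\Gamma_1f=\Gamma_0f\}$ and $\widetilde A_{\widetilde B}g:=\widetilde Tg$ on $\operatorname{dom}\widetilde A_{\widetilde B}:=\{g\in\operatorname{dom}\widetilde T:\widetilde\Gamma_1g\in\operatorname{dom}\widetilde B,\ \widetilde B\widetilde\Gamma_1g=\widetilde\Gamma_0g\}$. $\sigma_p$ denotes the set of eigenvalues. *)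

From HB Require Import structures.
From mathcomp Require Import all_boot all_order all_algebra.
From mathcomp Require Import boolp classical_sets reals.
From mathcomp.real_closed Require Import complex.
Set Implicit Arguments. Unset Strict Implicit. Unset Printing Implicit Defensive.
Import Order.TTheory GRing.Theory Num.Theory.
Local Open Scope ring_scope.
Local Open Scope classical_set_scope.

Section HilbertDefs.
Variable R : realType.
Local Notation C := (R[i]).

(* Complex Hilbert spaces, inner product linear in the first argument  *)
(* and conjugate linear in the second.                                 *)

Definition ip_norm (V : lmodType C) (ip : V -> V -> C) (x : V) : R :=
  Num.sqrt (complex.Re (ip x x)).

Definition ip_cvg (V : lmodType C) (ip : V -> V -> C) (u : nat -> V) (l : V) :=
  forall e : R, 0 < e -> exists N : nat, forall n, (N <= n)%N ->
    ip_norm ip (u n - l) < e.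

Definition ip_cauchy (V : lmodType C) (ip : V -> V -> C) (u : nat -> V) :=
  forall e : R, 0 < e -> exists N : nat, forall m n, (N <= m)%N -> (N <= n)%N ->
    ip_norm ip (u m - u n) < e.

Record hilbert := Hilbert {
  hcar :> lmodType C;
  hip : hcar -> hcar -> C;
  hip_linl : forall (a : C) (x y z : hcar), hip (a *: x + y) z = a * hip x z + hip y z;
  hip_conj : forall x y : hcar, hip y x = conjc (hip x y);
  hip_ge0 : forall x : hcar, 0 <= hip x x;
  hip_def : forall x : hcar, hip x x = 0 -> x = 0;
  hcomplete : forall u : nat -> hcar, ip_cauchy hip u -> exists l, ip_cvg hip u l
}.

Definition hnorm (H : hilbert) (x : H) : R := ip_norm (@hip H) x.
Definition hcvg (H : hilbert) (u : nat -> H) (l : H) := ip_cvg (@hip H) u l.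

Definition hdense (H : hilbert) (D : set H) :=
  forall (x : H) (e : R), 0 < e -> exists y, D y /\ hnorm (x - y) < e.

Definition separable (H : hilbert) :=
  exists d : nat -> H, hdense (range d).

Record op (V W : hilbert) := Op { dom : set V; app : V -> W }.

Definition linear_op (V W : hilbert) (A : op V W) :=
  dom A 0 /\
  (forall (a : C) x y, dom A x -> dom A y ->
     dom A (a *: x + y) /\ app A (a *: x + y) = a *: app A x + app A y).

Definition linear_on (V W : hilbert) (D : set V) (f : V -> W) :=
  forall (a : C) x y, D x -> D y -> f (a *: x + y) = a *: f x + f y.

Definition densely_defined (V W : hilbert) (A : op V W) := hdense (dom A).

Definition closed_op (V W : hilbert) (A : op V W) :=
  forall (u : nat -> V) x y, (forall n, dom A (u n)) ->
    hcvg u x -> hcvg (fun n => app A (u n)) y -> dom A x /\ app A x = y.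

Definition op_le (V W : hilbert) (A B : op V W) :=
  forall x, dom A x -> dom B x /\ app B x = app A x.

Definition op_eq (V W : hilbert) (A B : op V W) :=
  (forall x, dom A x <-> dom B x) /\ (forall x, dom A x -> app A x = app B x).

Definition is_closure (V W : hilbert) (T A : op V W) :=
  closed_op A /\ op_le T A /\
  forall x, dom A x -> exists u : nat -> V, (forall n, dom T (u n)) /\
     hcvg u x /\ hcvg (fun n => app T (u n)) (app A x).

(* the adjoint operator (meaningful for densely defined A) *)
Definition adj_rel (V W : hilbert) (A : op V W) (g : W) (h : V) :=
  forall f, dom A f -> hip (app A f) g = hip f h.

Definition op_adj (V W : hilbert) (A : op V W) : op W V :=
  Op [set g | exists h, adj_rel A g h] (fun g => xget 0 (adj_rel A g)).

Definition op_id (V : hilbert) : op V V := Op setT id.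

Definition op_comp (U V W : hilbert) (A : op V W) (B : op U V) : op U W :=
  Op [set x | dom B x /\ dom A (app B x)] (fun x => app A (app B x)).

Definition op_minus (V W : hilbert) (A B : op V W) : op V W :=
  Op (dom A `&` dom B) (fun x => app A x - app B x).

Definition op_shift (V : hilbert) (A : op V V) (l : C) : op V V :=
  Op (dom A) (fun x => app A x - l *: x).

Definition op_restrict (V W : hilbert) (A : op V W) (P : set V) : op V W :=
  Op (dom A `&` P) (app A).

Definition op_inv (V W : hilbert) (A : op V W) : op W V :=
  Op [set y | exists x, dom A x /\ app A x = y]
     (fun y => xget 0 [set x | dom A x /\ app A x = y]).

Definition resolvent (V : hilbert) (A : op V V) (l : C) :=
  (forall y : V, exists x, dom A x /\ app A x - l *: x = y) /\
  (forall x, dom A x -> app A x - l *: x = 0 -> x = 0) /\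
  (exists c : R, forall x, dom A x -> hnorm x <= c * hnorm (app A x - l *: x)).

Definition is_eigenvalue (V : hilbert) (A : op V V) (l : C) :=
  exists f, dom A f /\ f <> 0 /\ app A f = l *: f.

Definition adjoint_pair (H : hilbert) (S St : op H H) :=
  linear_op S /\ linear_op St /\ densely_defined S /\ densely_defined St /\
  closed_op S /\ closed_op St /\
  forall f g, dom S f -> dom St g -> hip (app S f) g = hip f (app St g).

Definition A0 (H G : hilbert) (T : op H H) (Gam0 : H -> G) : op H H :=
  op_restrict T [set f | Gam0 f = 0].

Definition gammaf (H G : hilbert) (T : op H H) (Gam0 : H -> G) (l : C) : op G H :=
  op_inv (Op (dom T `&` [set f | app T f = l *: f]) Gam0).

Definition weylM (H G : hilbert) (T : op H H) (Gam0 Gam1 : H -> G) (l : C) : op G G :=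
  op_comp (Op (dom T) Gam1) (gammaf T Gam0 l).

Definition AB (H G : hilbert) (T : op H H) (Gam0 Gam1 : H -> G) (B : op G G) : op H H :=
  Op [set f | dom T f /\ dom B (Gam1 f) /\ app B (Gam1 f) = Gam0 f] (app T).

(* The triple {G, (Gam0, Gam1), (Gamt0, Gamt1)} for {S, St} with the cores
   T, Tt of S^*, St^*, satisfying (G), (D), (M). *)
Definition triple_GDM (H G : hilbert) (S St T Tt : op H H)
    (Gam0 Gam1 Gamt0 Gamt1 : H -> G) :=
  adjoint_pair S St /\
  linear_op T /\ linear_op Tt /\
  is_closure T (op_adj S) /\ is_closure Tt (op_adj St) /\
  linear_on (dom T) Gam0 /\ linear_on (dom T) Gam1 /\
  linear_on (dom Tt) Gamt0 /\ linear_on (dom Tt) Gamt1 /\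
  (forall f g, dom T f -> dom Tt g ->
     hip (app T f) g - hip f (app Tt g) = hip (Gam1 f) (Gamt0 g) - hip (Gam0 f) (Gamt1 g)) /\
  hdense [set Gam0 f | f in dom T] /\ hdense [set Gamt0 g | g in dom Tt] /\
  op_eq (op_adj (A0 T Gam0)) (A0 Tt Gamt0) /\ op_eq (op_adj (A0 Tt Gamt0)) (A0 T Gam0).

End HilbertDefs.

From mathcomp Require Import all_boot all_order all_algebra.
From mathcomp Require Import boolp classical_sets reals.
From mathcomp.real_closed Require Import complex.
From mathcomp Require Import ring lra.
Set Implicit Arguments. Unset Strict Implicit. Unset Printing Implicit Defensive.
Import Order.TTheory GRing.Theory Num.Theory.
Local Open Scope ring_scope.
Local Open Scope classical_set_scope.
Local Open Scope complex_scope.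

(* Put x := (A0 - l)^-1 f + gamma(l) k with k := (I - B M(l))^-1 B gammat(conj l)^* f.
   Gam0 vanishes on the range of (A0 - l)^-1, and Gam1 (A0 - l)^-1 = gammat(conj l)^*:
   this is Green's identity tested against ker (Tt - conj l), whose image under Gamt0
   is dense because dom Tt = ker Gamt0 + ker (Tt - conj l).  Hence Gam0 x = k and
   Gam1 x = gammat(conj l)^* f + M(l) k, so that B Gam1 x = Gam0 x, i.e. x lies in
   dom A_B, and (T - l) x = f; as l is not an eigenvalue of A_B, x = (A_B - l)^-1 f.
   The decomposition of dom Tt holds because (A0 - l)^* = A0 Tt Gamt0 - conj l is onto:
   (A0 - l)^-1 is bounded, and the Riesz representation theorem (derived here from the
   projection theorem) turns v |-> ((A0 - l)^-1 v, y) into a vector w with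
   (A0 Tt Gamt0 - conj l) w = y.  Part (ii) is part (i) for the dual triple. *)

Section InnerProduct.
Variables (R : realType) (V : hilbert R).
Implicit Types (x y z : V) (a : R[i]) (t : R).

Lemma hipDl x y z : hip (x + y) z = hip x z + hip y z.
Proof. by have := hip_linl 1 x y z; rewrite scale1r mul1r. Qed.

Lemma hip0l z : hip 0 z = 0.
Proof. by apply/(@addrI _ (hip 0 z)); rewrite -hipDl !addr0. Qed.

Lemma hipZl a x z : hip (a *: x) z = a * hip x z.
Proof. by have := hip_linl a x 0 z; rewrite !addr0 hip0l addr0. Qed.

Lemma hipNl x z : hip (- x) z = - hip x z.
Proof. by rewrite -scaleN1r hipZl mulN1r. Qed.

Lemma hipBl x y z : hip (x - y) z = hip x z - hip y z.
Proof. by rewrite hipDl hipNl. Qed.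

Lemma hipDr x y z : hip z (x + y) = hip z x + hip z y.
Proof. by rewrite hip_conj hipDl rmorphD /= -!hip_conj. Qed.

Lemma hipZr a x z : hip z (a *: x) = conjc a * hip z x.
Proof. by rewrite hip_conj hipZl rmorphM /= -hip_conj. Qed.

Lemma hip0r z : hip z 0 = 0.
Proof. by rewrite hip_conj hip0l rmorph0. Qed.

Lemma hipNr x z : hip z (- x) = - hip z x.
Proof. by rewrite hip_conj hipNl rmorphN /= -hip_conj. Qed.

Lemma hipBr x y z : hip z (x - y) = hip z x - hip z y.
Proof. by rewrite hipDr hipNr. Qed.

Lemma hip_eq0_sym x y : hip x y = 0 -> hip y x = 0.
Proof. by move=> xy0; rewrite hip_conj xy0 rmorph0. Qed.

Definition hnorm2 x : R := complex.Re (hip x x).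

Lemma hipxx x : hip x x = (hnorm2 x)%:C.
Proof. by have := hip_ge0 x; rewrite /hnorm2 lecE; case: (hip x x) => a b /= /andP[/eqP->]. Qed.

Lemma hnorm2_ge0 x : 0 <= hnorm2 x.
Proof. by rewrite -lecR -hipxx hip_ge0. Qed.

Lemma hnorm2_eq0 x : hnorm2 x = 0 -> x = 0.
Proof. by move=> h; apply: hip_def; rewrite hipxx h. Qed.

Lemma hnormE x : hnorm x ^+ 2 = hnorm2 x.
Proof. by rewrite sqr_sqrtr ?hnorm2_ge0. Qed.

Lemma hnorm_ge0 x : 0 <= hnorm x.
Proof. exact: sqrtr_ge0. Qed.

Lemma hnorm_gt0 x : x <> 0 -> 0 < hnorm x.
Proof.
move=> x0; rewrite lt_def hnorm_ge0 andbT; apply/eqP => hx0.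
by apply/x0/hnorm2_eq0; rewrite -hnormE hx0 expr0n.
Qed.

Lemma Re_hipC x y : complex.Re (hip x y) = complex.Re (hip y x).
Proof. by rewrite (hip_conj x y); case: (hip x y). Qed.

Lemma hnorm2D x y : hnorm2 (x + y) = hnorm2 x + 2 * complex.Re (hip x y) + hnorm2 y.
Proof. by rewrite /hnorm2 hipDl !hipDr !raddfD /= (Re_hipC y x); lra. Qed.

Lemma hnorm2N x : hnorm2 (- x) = hnorm2 x.
Proof. by rewrite /hnorm2 hipNl hipNr opprK. Qed.

Lemma hnorm_sym x y : hnorm (x - y) = hnorm (y - x).
Proof. by rewrite /hnorm /ip_norm -/(hnorm2 _) -opprB hnorm2N. Qed.

Lemma Re_hipZr t x y : complex.Re (hip x (t%:C *: y)) = t * complex.Re (hip x y).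
Proof. by rewrite hipZr conjc_real; case: (hip x y) => a b /=; rewrite mul0r subr0. Qed.

Lemma hnorm2Z t x : hnorm2 (t%:C *: x) = t ^+ 2 * hnorm2 x.
Proof. by rewrite /hnorm2 hipZl hipZr conjc_real hipxx; simpc; rewrite /= expr2 mulrA. Qed.

Lemma Re_hipi x y : complex.Re (hip x ('i%C *: y)) = complex.Im (hip x y).
Proof. by rewrite hipZr; case: (hip x y) => a b /=; lra. Qed.

Lemma hnorm_i x : hnorm ('i%C *: x) = hnorm x.
Proof. by rewrite /hnorm /ip_norm hipZl hipZr; case: (hip x x) => a b /=; congr Num.sqrt; lra. Qed.

Lemma Re_hip_sqr_le x y : complex.Re (hip x y) ^+ 2 <= hnorm2 x * hnorm2 y.
Proof.
have [y0|y_neq0] := eqVneq (hnorm2 y) 0.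
  by rewrite y0 mulr0 (hnorm2_eq0 y0) hip0r expr0n.
have y_gt0 : 0 < hnorm2 y by rewrite lt_def y_neq0 hnorm2_ge0.
set r := complex.Re (hip x y); set s := - r / hnorm2 y.
have := hnorm2_ge0 (x + s%:C *: y); rewrite hnorm2D hnorm2Z Re_hipZr -/r.
have -> : hnorm2 x + 2 * (s * r) + s ^+ 2 * hnorm2 y
        = (hnorm2 x * hnorm2 y - r ^+ 2) / hnorm2 y by rewrite /s; field.
by rewrite pmulr_lge0 ?invr_gt0 // subr_ge0.
Qed.

Lemma Re_hip_le x y : `|complex.Re (hip x y)| <= hnorm x * hnorm y.
Proof.
rewrite -ler_sqr ?nnegrE ?mulr_ge0 ?hnorm_ge0 // real_normK ?num_real //.
by rewrite exprMn !hnormE Re_hip_sqr_le.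
Qed.

Lemma Im_hip_le x y : `|complex.Im (hip x y)| <= hnorm x * hnorm y.
Proof. by rewrite -Re_hipi -(hnorm_i y) Re_hip_le. Qed.

Lemma ler_hnormD x y : hnorm (x + y) <= hnorm x + hnorm y.
Proof.
rewrite -ler_sqr ?nnegrE ?addr_ge0 ?hnorm_ge0 // hnormE hnorm2D sqrrD !hnormE.
by have := Re_hip_le x y; rewrite ler_norml => /andP[_]; lra.
Qed.

Lemma hnorm2_parallelogram x y :
  hnorm2 (x - y) + hnorm2 (x + y) = 2 * hnorm2 x + 2 * hnorm2 y.
Proof. by rewrite !hnorm2D hnorm2N hipNr raddfN /=; lra. Qed.

Lemma orthogonal_dense (D : set V) e : hdense D -> (forall d, D d -> hip e d = 0) -> e = 0.
Proof.
move=> D_dense e_perp; apply: contrapT => e_neq0.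
have e_gt0 := hnorm_gt0 e_neq0.
have [d [Dd ed]] := D_dense e (hnorm e / 2) (divr_gt0 e_gt0 (ltr0Sn _ 1)).
have eE : hnorm e ^+ 2 = complex.Re (hip e (e - d)).
  by rewrite hipBr (e_perp d Dd) subr0 hnormE.
have := Re_hip_le e (e - d); rewrite ler_norml -eE => /andP[_].
have : hnorm e * hnorm (e - d) <= hnorm e * (hnorm e / 2) by rewrite ler_pM2l // ltW.
nra.
Qed.

End InnerProduct.

Lemma inv_nat_lt (R : realType) (e : R) : 0 < e -> exists k : nat, k.+1%:R^-1 < e.
Proof. by move=> /ltr_add_invr[k]; rewrite add0r; exists k. Qed.

Lemma le_inv_nat (R : realType) (m n : nat) : (m <= n)%N -> n.+1%:R^-1 <= m.+1%:R^-1 :> R.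
Proof. by move=> mn; rewrite lef_pV2 ?posrE ?ltr0Sn // ler_nat. Qed.

Lemma inv_nat_le1 (R : realType) (n : nat) : 0 < (n.+1%:R^-1 : R) <= 1.
Proof. by rewrite invr_gt0 ltr0Sn invf_le1 ?ltr0Sn // ler1n. Qed.

Lemma quadratic_ge0_linear_eq0 (R : realFieldType) (r q : R) :
  0 <= q -> (forall t, 0 <= 2 * t * r + t ^+ 2 * q) -> r = 0.
Proof.
move=> q_ge0 quad; have q1_gt0 : 0 < q + 1 by lra.
have := quad (- r / (q + 1)).
have -> : 2 * (- r / (q + 1)) * r + (- r / (q + 1)) ^+ 2 * q
        = - (r ^+ 2 * (q + 2)) / (q + 1) ^+ 2 by field; lra.
rewrite pmulr_lge0 ?invr_gt0 ?exprn_gt0 // oppr_ge0 pmulr_lle0 ?sqr_ge0; last lra.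
by move=> r2_le0; apply/eqP; rewrite -sqrf_eq0 eq_le r2_le0 sqr_ge0.
Qed.

Lemma eq0_of_norm_le_eps (R : realFieldType) (z c : R) :
  (forall e, 0 < e -> `|z| <= c * e) -> z = 0.
Proof.
move=> small; apply/normr0_eq0/eqP; rewrite eq_le normr_ge0 andbT.
apply/ler_addgt0Pr => e e_gt0; rewrite add0r.
have c1_gt0 : 0 < `|c| + 1 by rewrite ltr_wpDl.
apply: (le_trans (small _ (divr_gt0 e_gt0 c1_gt0))).
rewrite mulrA ler_pdivrMr //.
by have := ler_norm c; nra.
Qed.

Section Projection.
Variables (R : realType) (V : hilbert R).
Implicit Types (N : set V) (u : nat -> V) (v : V).

Definition subspace N := N 0 /\ forall a x y, N x -> N y -> N (a *: x + y).

Definition closed_subspace N :=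
  subspace N /\ forall u l, (forall n, N (u n)) -> hcvg u l -> N l.

Lemma subspaceZ N a x : subspace N -> N x -> N (a *: x).
Proof. by move=> [N0 NZD] Nx; rewrite -[a *: x]addr0; exact: NZD. Qed.

Lemma subspaceD N x y : subspace N -> N x -> N y -> N (x + y).
Proof. by move=> [_ NZD] Nx Ny; rewrite -[x]scale1r; exact: NZD. Qed.

Lemma hnorm2_sub_midpoint v x y :
  hnorm2 (x - y) = 2 * hnorm2 (v - x) + 2 * hnorm2 (v - y)
                   - 4 * hnorm2 (v - (2^-1)%:C *: (x + y)).
Proof.
have halfK : (2 : R)%:C *: (v - (2^-1)%:C *: (x + y)) = (v - x) + (v - y).
  rewrite scalerBr scalerA -rmorphM /= mulfV ?pnatr_eq0 // scale1r.
  have -> : (2 : R)%:C = 1 + 1 by rewrite rmorphD rmorph1.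
  by rewrite scalerDl scale1r opprD addrACA.
have diffE : v - y - (v - x) = x - y by rewrite opprB addrC addrA subrK.
have := hnorm2_parallelogram (v - y) (v - x).
rewrite diffE [v - y + (v - x)]addrC -halfK hnorm2Z.
by lra.
Qed.

Lemma minimizing_cauchy N v u (d : R) : subspace N -> 0 <= d ->
  (forall n, N n -> d <= hnorm (v - n)) ->
  (forall k, N (u k) /\ hnorm (v - u k) < d + k.+1%:R^-1) ->
  ip_cauchy (@hip _ V) u.
Proof.
move=> sN d_ge0 d_le u_min.
have sqr_bound k : hnorm2 (v - u k) <= d ^+ 2 + (2 * d + 1) * k.+1%:R^-1.
  (* [lra] and [nra] only handle the reciprocals [k.+1%:R^-1] once generalized. *)
  have [_] := u_min k; have := inv_nat_le1 R k.
  move: (k.+1%:R^-1 : R) => s /andP[s0 s1] lt.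
  have : hnorm (v - u k) ^+ 2 <= (d + s) ^+ 2.
    by rewrite ler_sqr ?nnegrE ?hnorm_ge0 ?addr_ge0 ?(ltW lt) ?(ltW s0).
  rewrite hnormE; nra.
have gap m k : hnorm2 (u m - u k) <= 2 * (2 * d + 1) * (m.+1%:R^-1 + k.+1%:R^-1).
  rewrite (hnorm2_sub_midpoint v).
  have Nmid : N ((2^-1)%:C *: (u m + u k)).
    by apply: subspaceZ => //; apply: subspaceD => //; [exact: (u_min m).1 | exact: (u_min k).1].
  have : d ^+ 2 <= hnorm2 (v - (2^-1)%:C *: (u m + u k)).
    by rewrite -hnormE ler_sqr ?nnegrE ?hnorm_ge0 ?d_le.
  have := sqr_bound m; have := sqr_bound k.
  move: (m.+1%:R^-1 : R) (k.+1%:R^-1 : R) => sm sk; nra.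
move=> e e_gt0.
have den_gt0 : 0 < 4 * (2 * d + 1) by lra.
have [K K_lt] := inv_nat_lt (divr_gt0 (exprn_gt0 2 e_gt0) den_gt0).
rewrite ltr_pdivlMr // in K_lt.
exists K => m k Km Kk; rewrite -[ip_norm _ _]/(hnorm _).
rewrite -ltr_sqr ?nnegrE ?hnorm_ge0 ?ltW // hnormE.
have := gap m k; have := le_inv_nat R Km; have := le_inv_nat R Kk.
move: K_lt; move: (K.+1%:R^-1 : R) (m.+1%:R^-1 : R) (k.+1%:R^-1 : R) => sK sm sk.
nra.
Qed.

Lemma minimizing_limit v u p (d : R) :
  (forall k, hnorm (v - u k) < d + k.+1%:R^-1) -> hcvg u p -> hnorm (v - p) <= d.
Proof.
move=> u_min u_p; apply/ler_addgt0Pr => e e_gt0.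
have e2_gt0 : 0 < e / 2 by rewrite divr_gt0.
have [K1 K1_p] := u_p _ e2_gt0; have [K2 K2_lt] := inv_nat_lt e2_gt0.
pose k := maxn K1 K2.
have close : hnorm (u k - p) < e / 2 := K1_p k (leq_maxl _ _).
have := le_inv_nat R (leq_maxr K1 K2 : (K2 <= k)%N).
have := ler_hnormD (v - u k) (u k - p); rewrite subrKA.
have := u_min k; move: K2_lt; move: (k.+1%:R^-1 : R) (K2.+1%:R^-1 : R) => s s2.
lra.
Qed.

Lemma minimizer_exists N v : closed_subspace N ->
  exists2 p, N p & forall n, N n -> hnorm (v - p) <= hnorm (v - n).
Proof.
move=> [sN N_closed].
pose D := [set hnorm (v - n) | n in N].
have D_inf : has_inf D.
  split; first by exists (hnorm (v - 0)), 0 => //; exact: sN.1.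
  by exists 0 => _ [n _ <-]; exact: hnorm_ge0.
have d_le n : N n -> inf D <= hnorm (v - n) by move=> Nn; apply: ge_inf D_inf.2 _ _; exists n.
have d_ge0 : 0 <= inf D by apply: lb_le_inf D_inf.1 _ => _ [n _ <-]; exact: hnorm_ge0.
have approx k : exists n, N n /\ hnorm (v - n) < inf D + k.+1%:R^-1.
  have /andP[k_gt0 _] := inv_nat_le1 R k.
  by have [_ [n Nn <-]] := inf_adherent k_gt0 D_inf; exists n.
have [u u_min] := choice approx.
have [p u_p] := hcomplete (minimizing_cauchy sN d_ge0 d_le u_min).
exists p; first exact: N_closed u p (fun k => (u_min k).1) u_p.
move=> n Nn; apply: le_trans (d_le n Nn).
exact: minimizing_limit (fun k => (u_min k).2) u_p.
Qed.

Lemma minimizer_orthogonal N v p : subspace N -> N p ->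
  (forall n, N n -> hnorm (v - p) <= hnorm (v - n)) ->
  forall n, N n -> hip (v - p) n = 0.
Proof.
move=> sN Np p_min.
have Re_eq0 n : N n -> complex.Re (hip (v - p) n) = 0.
  move=> Nn; apply: (quadratic_ge0_linear_eq0 (hnorm2_ge0 n)) => t.
  have := p_min _ (sN.2 (- t%:C) _ _ Nn Np).
  have -> : v - (- t%:C *: n + p) = (v - p) + t%:C *: n.
    by rewrite scaleNr opprD opprK addrCA addrC.
  rewrite -ler_sqr ?nnegrE ?hnorm_ge0 // !hnormE.
  by rewrite (hnorm2D (v - p)) hnorm2Z Re_hipZr; lra.
move=> n Nn; have := Re_eq0 _ (subspaceZ 'i sN Nn); rewrite Re_hipi.
by have := Re_eq0 n Nn; case: (hip (v - p) n) => a b /= -> ->.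
Qed.

Lemma orthogonal_projection N v : closed_subspace N ->
  exists2 p, N p & forall n, N n -> hip (v - p) n = 0.
Proof.
move=> cN; have [p Np p_min] := minimizer_exists v cN.
by exists p => //; exact: minimizer_orthogonal cN.1 Np p_min.
Qed.

End Projection.

Section Riesz.
Variables (R : realType) (V : hilbert R) (phi : V -> R[i]) (c : R).
Hypothesis phi_lin : forall a x y, phi (a *: x + y) = a * phi x + phi y.
Hypothesis c_ge0 : 0 <= c.
Hypothesis phi_bounded : forall x,
  `|complex.Re (phi x)| <= c * hnorm x /\ `|complex.Im (phi x)| <= c * hnorm x.

Lemma functional0 : phi 0 = 0.
Proof.
have := phi_lin 1 0 0; rewrite scale1r addr0 mul1r => phi00.
by apply/esym/(@addrI _ (phi 0)); rewrite addr0 {1}phi00.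
Qed.

Lemma functionalB x y : phi (x - y) = phi x - phi y.
Proof. by rewrite -scaleN1r addrC phi_lin mulN1r addrC. Qed.

Lemma functional_kernel_closed : closed_subspace [set x | phi x = 0].
Proof.
split.
  by split=> [|a x y /= x0 y0]; rewrite /= ?functional0 ?phi_lin ?x0 ?y0 ?mulr0 ?addr0.
move=> u l u0 u_l.
have small e : 0 < e -> exists n, phi l = phi (l - u n) /\ hnorm (l - u n) < e.
  move=> e_gt0; have [K K_l] := u_l e e_gt0; exists K.
  by rewrite functionalB u0 subr0 hnorm_sym; split=> //; exact: K_l.
have Re0 : complex.Re (phi l) = 0.
  apply: (@eq0_of_norm_le_eps _ _ c) => e /small[n [-> ln]].
  by apply: le_trans (proj1 (phi_bounded _)) _; apply: ler_wpM2l => //; exact: ltW.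
have Im0 : complex.Im (phi l) = 0.
  apply: (@eq0_of_norm_le_eps _ _ c) => e /small[n [-> ln]].
  by apply: le_trans (proj2 (phi_bounded _)) _; apply: ler_wpM2l => //; exact: ltW.
by move: Re0 Im0; rewrite /=; case: (phi l) => a b /= -> ->.
Qed.

(* [z] is orthogonal to [ker phi], so [x - (phi x / phi z) z] is orthogonal to [z]. *)
Lemma riesz_representation : exists g, forall x, phi x = hip x g.
Proof.
have [phi0 | /existsNP[v phiv]] := pselect (forall x, phi x = 0).
  by exists 0 => x; rewrite hip0r phi0.
have [p phip z_perp] := orthogonal_projection v functional_kernel_closed.
set z := v - p in z_perp.
have phiz : phi z != 0 by rewrite /z functionalB phip subr0; apply/eqP.
have hipzz : hip z z != 0 by apply: contraNneq phiz => /hip_def ->; rewrite functional0.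
exists (conjc (phi z / hip z z) *: z) => x; rewrite hipZr conjcK.
have : hip (- (phi x / phi z) *: z + x) z = 0.
  by apply/hip_eq0_sym/z_perp; rewrite /= phi_lin; field.
rewrite hip_linl => /eqP; rewrite addrC addr_eq0 mulNr opprK => /eqP ->.
by field; apply/andP.
Qed.

End Riesz.

Lemma subrACA (M : zmodType) (a b c d : M) : (a - b) - (c - d) = (a - c) - (b - d).
Proof. by rewrite !opprD !opprK addrACA. Qed.

Section Operators.
Variables (R : realType) (V W : hilbert R).
Implicit Types (A : op V W) (D : set V) (f : V -> W).

Lemma linear_opD A x y : linear_op A -> dom A x -> dom A y ->
  dom A (x + y) /\ app A (x + y) = app A x + app A y.
Proof. by move=> [_ linA] Ax Ay; have := linA 1 x y Ax Ay; rewrite !scale1r. Qed.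

Lemma linear_opB A x y : linear_op A -> dom A x -> dom A y ->
  dom A (x - y) /\ app A (x - y) = app A x - app A y.
Proof.
by move=> [_ linA] Ax Ay; have := linA (-1) y x Ay Ax; rewrite !scaleN1r ![- _ + _]addrC.
Qed.

Lemma linear_op0 A : linear_op A -> app A 0 = 0.
Proof. by move=> linA; have [_] := linear_opB linA linA.1 linA.1; rewrite !subrr. Qed.

Lemma linear_onD D f x y : linear_on D f -> D x -> D y -> f (x + y) = f x + f y.
Proof. by move=> linf Dx Dy; have := linf 1 x y Dx Dy; rewrite !scale1r. Qed.

Lemma linear_onB D f x y : linear_on D f -> D x -> D y -> f (x - y) = f x - f y.
Proof.
by move=> linf Dx Dy; have := linf (-1) y x Dy Dx; rewrite !scaleN1r ![- _ + _]addrC.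
Qed.

Lemma linear_on0 D f : linear_on D f -> D 0 -> f 0 = 0.
Proof. by move=> linf D0; have := linear_onB linf D0 D0; rewrite !subrr. Qed.

Lemma op_invP A y : dom (op_inv A) y ->
  dom A (app (op_inv A) y) /\ app A (app (op_inv A) y) = y.
Proof. exact: xgetPex. Qed.

Lemma op_inv_app A x :
  (forall x1 x2, dom A x1 -> dom A x2 -> app A x1 = app A x2 -> x1 = x2) ->
  dom A x -> dom (op_inv A) (app A x) /\ app (op_inv A) (app A x) = x.
Proof.
move=> injA Ax; split; first by exists x.
by apply: xget_unique => [|x' [Ax' ex']]; [split | exact: injA].
Qed.

Lemma op_adjP A g : dom (op_adj A) g -> adj_rel A g (app (op_adj A) g).
Proof. exact: xgetPex. Qed.

Lemma adj_rel_uniq A g h1 h2 : hdense (dom A) ->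
  adj_rel A g h1 -> adj_rel A g h2 -> h1 = h2.
Proof.
move=> A_dense gh1 gh2; apply/eqP; rewrite -subr_eq0; apply/eqP.
apply: (orthogonal_dense A_dense) => x Ax.
by apply: hip_eq0_sym; rewrite hipBr -gh1 // -gh2 // subrr.
Qed.

Lemma op_eq_adj_rel A (At : op W V) g :
  op_eq (op_adj A) At -> dom At g -> adj_rel A g (app At g).
Proof.
move=> [domE appE] Atg; have Ag := proj2 (domE g) Atg.
by rewrite -appE //; exact: op_adjP.
Qed.

End Operators.

Lemma A0_linear (R : realType) (H G : hilbert R) (T : op H H) (Gam0 : H -> G) :
  linear_op T -> linear_on (dom T) Gam0 -> linear_op (A0 T Gam0).
Proof.
move=> [T0 linT] linG0; split; first by split=> //=; rewrite (linear_on0 linG0).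
move=> a x y [Tx x0] [Ty y0]; have [Txy ->] := linT a x y Tx Ty.
by split=> //; split=> //=; rewrite linG0 // x0 y0 scaler0 addr0.
Qed.

Lemma AB_linear (R : realType) (H G : hilbert R) (T : op H H) (Gam0 Gam1 : H -> G)
    (B : op G G) :
  linear_op T -> linear_on (dom T) Gam0 -> linear_on (dom T) Gam1 -> linear_op B ->
  linear_op (AB T Gam0 Gam1 B).
Proof.
move=> [T0 linT] linG0 linG1 linB; split.
  rewrite /= (linear_on0 linG1) // (linear_on0 linG0) // (linear_op0 linB).
  by split=> //; split=> //; exact: linB.1.
move=> a x y [Tx [Bx ex]] [Ty [By ey]]; have [Txy ->] := linT a x y Tx Ty.
have [Bxy eBxy] := linB.2 a _ _ Bx By.
by split=> //; split=> //; rewrite /= (linG0 a x y) ?(linG1 a x y) // -ex -ey.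
Qed.

Section Shift.
Variables (R : realType) (V : hilbert R) (A : op V V) (l : R[i]).
Hypothesis linA : linear_op A.

Lemma shift_injective :
  (forall x, dom A x -> app A x - l *: x = 0 -> x = 0) ->
  forall x y, dom A x -> dom A y -> app A x - l *: x = app A y - l *: y -> x = y.
Proof.
move=> ker0 x y Ax Ay exy; apply/eqP; rewrite -subr_eq0; apply/eqP.
have [Axy Axy_app] := linear_opB linA Ax Ay; apply: ker0 => //.
by rewrite Axy_app scalerBr subrACA exy subrr.
Qed.

Lemma not_eigenvalue_shift0 : ~ is_eigenvalue A l ->
  forall x, dom A x -> app A x - l *: x = 0 -> x = 0.
Proof.
move=> no_eig x Ax /eqP; rewrite subr_eq0 => /eqP Axl.
by apply: contrapT => x0; apply: no_eig; exists x.
Qed.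

Lemma op_inv_shift_app x :
  (forall x, dom A x -> app A x - l *: x = 0 -> x = 0) -> dom A x ->
  dom (op_inv (op_shift A l)) (app A x - l *: x) /\
  app (op_inv (op_shift A l)) (app A x - l *: x) = x.
Proof.
by move=> ker0 Ax; apply: (op_inv_app (A := op_shift A l)) => //; exact: shift_injective.
Qed.

Section Resolvent.
Hypothesis resA : resolvent A l.
Local Notation Rl := (app (op_inv (op_shift A l))).

Lemma resolventP v : dom A (Rl v) /\ app A (Rl v) - l *: Rl v = v.
Proof. exact: (op_invP (A := op_shift A l)) (resA.1 v). Qed.

Lemma resolventK x : dom A x -> Rl (app A x - l *: x) = x.
Proof. by move=> Ax; have [_] := op_inv_shift_app resA.2.1 Ax. Qed.

Lemma resolvent_linear a v w : Rl (a *: v + w) = a *: Rl v + Rl w.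
Proof.
have [Av Avl] := resolventP v; have [Aw Awl] := resolventP w.
have [Avw Avw_app] := linA.2 a _ _ Av Aw.
rewrite -(resolventK Avw); congr Rl.
by rewrite Avw_app scalerDr !scalerA mulrC -scalerA opprD addrACA -scalerBr Avl Awl.
Qed.

Lemma resolvent_bounded : exists2 c, 0 <= c & forall v, hnorm (Rl v) <= c * hnorm v.
Proof.
have [c c_bound] := resA.2.2; exists `|c| => // v.
have [Av Avl] := resolventP v; apply: le_trans (c_bound _ Av) _; rewrite Avl.
by apply: ler_wpM2r; [exact: hnorm_ge0 | exact: ler_norm].
Qed.

Lemma resolvent_adjoint_onto (At : op V V) : hdense (dom A) -> op_eq (op_adj A) At ->
  forall y, exists2 w, dom At w & app At w - conjc l *: w = y.
Proof.
move=> A_dense adjA y; have [c c_ge0 Rl_bound] := resolvent_bounded.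
have [w w_rep] : exists w, forall v, hip (Rl v) y = hip v w.
  apply: (@riesz_representation _ _ _ (c * hnorm y)) => [a v u||v].
  - by rewrite resolvent_linear hip_linl.
  - by rewrite mulr_ge0 ?hnorm_ge0.
  - have Rl_y : hnorm (Rl v) * hnorm y <= c * hnorm y * hnorm v.
      by rewrite mulrAC ler_wpM2r ?hnorm_ge0.
    by split; apply: le_trans Rl_y; [exact: Re_hip_le | exact: Im_hip_le].
have w_adj : adj_rel A w (y + conjc l *: w).
  move=> u Au; have := w_rep (app A u - l *: u).
  rewrite resolventK // hipBl hipZl hipDr hipZr conjcK => ->.
  by rewrite subrK.
have Atw : dom At w by apply/adjA.1; exists (y + conjc l *: w).
exists w => //.
by rewrite (adj_rel_uniq A_dense (op_eq_adj_rel adjA Atw) w_adj) addrK.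
Qed.

Lemma adjoint_eigenvector_eq0 (At : op V V) g : op_eq (op_adj A) At ->
  dom At g -> app At g = conjc l *: g -> g = 0.
Proof.
move=> adjA Atg eig_g; apply: hip_def.
have [Ag Agl] := resolventP g; rewrite -{1}Agl hipBl.
by rewrite (op_eq_adj_rel adjA Atg) // eig_g hipZr conjcK hipZl subrr.
Qed.

End Resolvent.
End Shift.

Lemma gammaf_app (R : realType) (H G : hilbert R) (T : op H H) (Gam0 : H -> G) l g :
  linear_op T -> linear_on (dom T) Gam0 ->
  (forall g, dom T g -> app T g = l *: g -> Gam0 g = 0 -> g = 0) ->
  dom T g -> app T g = l *: g -> app (gammaf T Gam0 l) (Gam0 g) = g.
Proof.
move=> linT linG0 ker0 Tg eig_g.
pose K := Op (dom T `&` [set f | app T f = l *: f]) Gam0.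
have K_inj x1 x2 : dom K x1 -> dom K x2 -> app K x1 = app K x2 -> x1 = x2.
  move=> [Tx1 eig1] [Tx2 eig2] /= e12; apply/eqP; rewrite -subr_eq0; apply/eqP.
  have [Tx12 eig12] := linear_opB linT Tx1 Tx2; apply: ker0 => //.
    by rewrite eig12 eig1 eig2 scalerBr.
  by rewrite (linear_onB linG0) // e12 subrr.
exact: (op_inv_app K_inj (conj Tg eig_g)).2.
Qed.

Section KreinFormula.
Variables (R : realType) (H G : hilbert R) (St T Tt : op H H).
Variables (Gam0 Gam1 Gamt0 Gamt1 : H -> G).
Hypotheses (linT : linear_op T) (linTt : linear_op Tt).
Hypotheses (Tt_adj_St : op_le Tt (op_adj St)) (St_dense : densely_defined St).
Hypotheses (linG0 : linear_on (dom T) Gam0) (linG1 : linear_on (dom T) Gam1).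
Hypothesis linGt0 : linear_on (dom Tt) Gamt0.
Hypothesis green : forall f g, dom T f -> dom Tt g ->
  hip (app T f) g - hip f (app Tt g) = hip (Gam1 f) (Gamt0 g) - hip (Gam0 f) (Gamt1 g).
Hypothesis Gamt0_dense : hdense [set Gamt0 g | g in dom Tt].
Hypothesis adjA0 : op_eq (op_adj (A0 T Gam0)) (A0 Tt Gamt0).
Hypothesis adjA0t : op_eq (op_adj (A0 Tt Gamt0)) (A0 T Gam0).

Lemma dom_St_A0 u : dom St u -> dom (A0 T Gam0) u.
Proof.
move=> St_u; apply/adjA0t.1; exists (app St u) => g [Tt_g _] /=.
have [adj_g Ttg_E] := Tt_adj_St Tt_g.
have := op_adjP adj_g St_u; rewrite Ttg_E => St_Tt.
by rewrite hip_conj -St_Tt -hip_conj.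
Qed.

Lemma A0_dense : hdense (dom (A0 T Gam0)).
Proof.
move=> x e e_gt0; have [y [St_y xy]] := St_dense x e_gt0.
by exists y; split=> //; exact: dom_St_A0.
Qed.

Section SpectralParameter.
Variable l : R[i].
Hypothesis resA0 : resolvent (A0 T Gam0) l.
Local Notation R0 := (app (op_inv (op_shift (A0 T Gam0) l))).
Local Notation gammat := (gammaf Tt Gamt0 (conjc l)).

Lemma gammat_Gamt0 g : dom Tt g -> app Tt g = conjc l *: g -> app gammat (Gamt0 g) = g.
Proof.
apply: gammaf_app => // g' Tt_g' eig_g' g'0.
exact: (adjoint_eigenvector_eq0 resA0 adjA0 (conj Tt_g' g'0)).
Qed.

Lemma Tt_eigen_decomposition g : dom Tt g ->
  exists g1, [/\ dom Tt g1, app Tt g1 = conjc l *: g1 & Gamt0 g1 = Gamt0 g].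
Proof.
move=> Tt_g; have [w [Tt_w w0] w_E] := resolvent_adjoint_onto (A0_linear linT linG0)
  resA0 A0_dense adjA0 (app Tt g - conjc l *: g).
have [Tt_gw gw_E] := linear_opB linTt Tt_g Tt_w.
exists (g - w); split=> //; last by rewrite (linear_onB linGt0) // w0 subr0.
by apply/eqP; rewrite gw_E scalerBr -subr_eq0 subrACA -w_E subrr.
Qed.

Lemma Gam1_resolvent f h : adj_rel gammat f h -> Gam1 (R0 f) = h.
Proof.
move=> f_h; have [[T_x x0] x_E] := resolventP resA0 f.
apply/eqP; rewrite -subr_eq0; apply/eqP.
apply: (orthogonal_dense Gamt0_dense) => _ [g Tt_g <-].
have [g1 [Tt_g1 eig_g1 <-]] := Tt_eigen_decomposition Tt_g.
have := green T_x Tt_g1; rewrite x0 hip0l subr0 eig_g1 hipZr conjcK -hipZl -hipBl x_E.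
have := f_h (Gamt0 g1) (ex_intro _ g1 (conj (conj Tt_g1 eig_g1) erefl)).
rewrite gammat_Gamt0 // => g1_f f_g1.
by rewrite hipBl -f_g1 (hip_conj (Gamt0 g1) h) -g1_f -hip_conj subrr.
Qed.

Lemma krein_resolvent (B : op G G) f :
  linear_op B -> ~ is_eigenvalue (AB T Gam0 Gam1 B) l ->
  dom (op_comp B (op_adj gammat)) f ->
  dom (op_inv (op_minus (op_id G) (op_comp B (weylM T Gam0 Gam1 l))))
    (app (op_comp B (op_adj gammat)) f) ->
  dom (op_inv (op_shift (AB T Gam0 Gam1 B) l)) f /\
  app (op_inv (op_shift (AB T Gam0 Gam1 B) l)) f =
    R0 f + app (gammaf T Gam0 l)
      (app (op_inv (op_minus (op_id G) (op_comp B (weylM T Gam0 Gam1 l))))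
        (app (op_comp B (op_adj gammat)) f)).
Proof.
move=> linB no_eig [adj_f B_h] k_dom; set h := app (op_adj gammat) f in B_h k_dom *.
have [[_ [[gam_k T_u] B_u]] k_E] := op_invP k_dom.
set k := app (op_inv _) (app B h) in gam_k T_u B_u k_E *.
set u := app (gammaf T Gam0 l) k in T_u B_u k_E *.
have {}k_E : k - app B (Gam1 u) = app B h := k_E.
have {}B_u : dom B (Gam1 u) := B_u.
have [[_ eig_u] /= u_k] := op_invP gam_k; rewrite -/u in eig_u u_k.
have [[T_x x0] x_E] := resolventP resA0 f.
have [T_xu xu_E] := linear_opD linT T_x T_u.
have Gam1_xu : Gam1 (R0 f + u) = h + Gam1 u.
  by rewrite (linear_onD linG1) // (Gam1_resolvent (op_adjP adj_f)).
have [B_hu hu_E] := linear_opD linB B_h B_u.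
have AB_xu : dom (AB T Gam0 Gam1 B) (R0 f + u).
  split=> //; rewrite Gam1_xu (linear_onD linG0) // x0 u_k add0r; split=> //.
  by rewrite hu_E -k_E subrK.
have linAB := AB_linear linT linG0 linG1 linB.
have := op_inv_shift_app linAB (not_eigenvalue_shift0 no_eig) AB_xu.
have -> // : app (AB T Gam0 Gam1 B) (R0 f + u) - l *: (R0 f + u) = f.
by rewrite /= xu_E scalerDr opprD addrACA x_E eig_u subrr addr0.
Qed.

End SpectralParameter.
End KreinFormula.

Lemma green_sym (R : realType) (H G : hilbert R) (T Tt : op H H)
    (Gam0 Gam1 Gamt0 Gamt1 : H -> G) :
  (forall f g, dom T f -> dom Tt g ->
    hip (app T f) g - hip f (app Tt g) = hip (Gam1 f) (Gamt0 g) - hip (Gam0 f) (Gamt1 g)) ->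
  forall g f, dom Tt g -> dom T f ->
    hip (app Tt g) f - hip g (app T f) = hip (Gamt1 g) (Gam0 f) - hip (Gamt0 g) (Gam1 f).
Proof.
move=> green g f Tt_g T_f; apply: oppr_inj; rewrite !opprB.
rewrite (hip_conj (app T f) g) (hip_conj f (app Tt g)) -rmorphB green //.
by rewrite rmorphB /= -!hip_conj.
Qed.

Theorem corollary4p5 (R : realType) (H G : hilbert R) (S St T Tt : op H H)
  (Gam0 Gam1 Gamt0 Gamt1 : H -> G) :
  separable H ->
  triple_GDM S St T Tt Gam0 Gam1 Gamt0 Gamt1 ->
  (exists l0, resolvent (A0 T Gam0) l0) ->
  (* (i) *)
  (forall (B : op G G) (l : R[i]) (f : H),
     linear_op B ->
     resolvent (A0 T Gam0) l ->
     ~ is_eigenvalue (AB T Gam0 Gam1 B) l ->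
     dom (op_comp B (op_adj (gammaf Tt Gamt0 (conjc l)))) f ->
     dom (op_inv (op_minus (op_id G) (op_comp B (weylM T Gam0 Gam1 l))))
       (app (op_comp B (op_adj (gammaf Tt Gamt0 (conjc l)))) f) ->
     dom (op_inv (op_shift (AB T Gam0 Gam1 B) l)) f /\
     app (op_inv (op_shift (AB T Gam0 Gam1 B) l)) f =
       app (op_inv (op_shift (A0 T Gam0) l)) f +
       app (gammaf T Gam0 l)
         (app (op_inv (op_minus (op_id G) (op_comp B (weylM T Gam0 Gam1 l))))
           (app (op_comp B (op_adj (gammaf Tt Gamt0 (conjc l)))) f))) /\
  (* (ii) *)
  (forall (Bt : op G G) (m : R[i]) (g : H),
     linear_op Bt ->
     resolvent (A0 Tt Gamt0) m ->
     ~ is_eigenvalue (AB Tt Gamt0 Gamt1 Bt) m ->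
     dom (op_comp Bt (op_adj (gammaf T Gam0 (conjc m)))) g ->
     dom (op_inv (op_minus (op_id G) (op_comp Bt (weylM Tt Gamt0 Gamt1 m))))
       (app (op_comp Bt (op_adj (gammaf T Gam0 (conjc m)))) g) ->
     dom (op_inv (op_shift (AB Tt Gamt0 Gamt1 Bt) m)) g /\
     app (op_inv (op_shift (AB Tt Gamt0 Gamt1 Bt) m)) g =
       app (op_inv (op_shift (A0 Tt Gamt0) m)) g +
       app (gammaf Tt Gamt0 m)
         (app (op_inv (op_minus (op_id G) (op_comp Bt (weylM Tt Gamt0 Gamt1 m))))
           (app (op_comp Bt (op_adj (gammaf T Gam0 (conjc m)))) g))).
Proof.
move=> _ [[_ [_ [S_dense [St_dense _]]]] [linT [linTt [[_ [T_adj_S _]] [[_ [Tt_adj_St _]]]]]]].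
move=> [linG0 [linG1 [linGt0 [linGt1 [green [G0_dense [Gt0_dense [adjA0 adjA0t]]]]]]]] _.
split=> [B l f linB resA0 | Bt m g linBt resAt0].
  exact: (krein_resolvent linT linTt Tt_adj_St St_dense linG0 linG1 linGt0 green).
exact: (krein_resolvent linTt linT T_adj_S S_dense linGt0 linGt1 linG0 (green_sym green)).
Qed.
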